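(* Let $\mathbb{F}_q$ be a finite field and $n\ge3$. For $n$ odd and $\alpha\in\mathbb{F}_q^*$ let $N_{\mathbb{D}_n}(\alpha)$ be the number of $\mathbb{F}_q$-points of $X_{\mathbb{D}_n}(\alpha,1,\dots,1)$; for $n$ even and $\alpha,\beta\in\mathbb{F}_q^*$ let $N_{\mathbb{D}_n}(\alpha,\beta)$ be the number of $\mathbb{F}_q$-points of $X_{\mathbb{D}_n}(\alpha,\beta,1,\dots,1)$. Then: (1) if $n$ is odd and $\alpha\neq1$, $N_{\mathbb{D}_n}(\alpha)=q^n-1$; (2) if $n$ is odd, $N_{\mathbb{D}_n}(1)=q^n-1+q^2\frac{q^{n-1}-1}{q^2-1}$; (3) if $n$ is even, $\alpha\neq\beta$, $\alpha\neq(-1)^{n/2}$ and $\beta\neq(-1)^{n/2}$, then $N_{\mathbb{D}_n}(\alpha,\beta)=(q^{n/2}-1)^2$; (4) if $n$ is even and $\alpha=\beta\neq(-1)^{n/2}$, then $N_{\mathbb{D}_n}(\alpha,\alpha)=(q^{n/2}-1)^2+q^2\frac{(q^{(n-2)/2}-1)(q^{n/2}-1)}{q^2-1}$; (5) if $n$ is even, $\alpha\neq\beta$ and $\alpha=(-1)^{n/2}$, then $N_{\mathbb{D}_n}((-1)^{n/2},\beta)=(q^{n/2}-1)^2+(q-1)q^{n/2}$; (6) if $n$ is even, $N_{\mathbb{D}_n}((-1)^{n/2},(-1)^{n/2})=(q^{n/2}-1)^2+2(q-1)q^{n/2}+q^2\frac{(q^{(n-2)/2}-1)(q^{n/2}-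1)}{q^2-1}+q^{(n+2)/2}$.
   Context: $X_{\mathbb{D}_n}(\alpha_1,\dots,\alpha_n)$ is the affine variety over $\mathbb{F}_q$ in variables $x_1,\dots,x_n,x'_1,\dots,x'_n$ defined by $x_1x'_1=1+\alpha_1x_3$, $x_2x'_2=1+\alpha_2x_3$, $x_3x'_3=1+\alpha_3x_1x_2x_4$, $x_ix'_i=1+\alpha_ix_{i-1}x_{i+1}$ for $4\le i\le n-1$, $x_nx'_n=1+\alpha_nx_{n-1}$ (for $n=3$: $x_3x'_3=1+\alpha_3x_1x_2$). Thus in $X_{\mathbb{D}_n}(\alpha,\beta,1,\dots,1)$ the parameters $\alpha,\beta$ sit on the two short leaves $1,2$ attached to vertex $3$. *)

From HB Require Import structures.
From mathcomp Require Import all_boot all_order all_algebra all_field.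
Set Implicit Arguments. Unset Strict Implicit. Unset Printing Implicit Defensive.
Import Order.TTheory GRing.Theory Num.Theory.
Local Open Scope ring_scope.

(* Coordinates are stored in a finite function on 'I_n (0-based); the paper's
   1-based coordinate x_k (1 <= k <= n) is [coord f k]; out-of-range is 0
   (never used by the equations). *)
Definition coord (F : finFieldType) (n : nat) (f : {ffun 'I_n -> F}) (k : nat) : F :=
  if k is k'.+1 then oapp f 0 (insub k' : option 'I_n) else 0.

Definition rhsD (F : finFieldType) (n : nat) (a : nat -> F)
    (x : nat -> F) (k : nat) : F :=
  if k == 1%N then 1 + a 1%N * x 3%N
  else if k == 2%N then 1 + a 2%N * x 3%N
  else if k == 3%N then
    (if n == 3%N then 1 + a 3%N * x 1%N * x 2%N
     else 1 + a 3%N * x 1%N * x 2%N * x 4%N)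
  else if k == n then 1 + a n * x n.-1
  else 1 + a k * x k.-1 * x k.+1.

Definition NX (F : finFieldType) (n : nat) (a : nat -> F) : nat :=
  #|[set p : {ffun 'I_n -> F} * {ffun 'I_n -> F} |
     [forall i : 'I_n,
        coord p.1 i.+1 * coord p.2 i.+1 == rhsD n a (coord p.1) i.+1]]|.

Definition params2 (F : finFieldType) (al be : F) (k : nat) : F :=
  if k == 1%N then al else if k == 2%N then be else 1.

Definition NDodd (F : finFieldType) (n : nat) (al : F) : nat := NX n (params2 al 1).
Definition NDeven (F : finFieldType) (n : nat) (al be : F) : nat := NX n (params2 al be).

From Pilot Require Import Defs.
From HB Require Import structures.
From mathcomp Require Import all_boot all_order all_algebra all_field.
From mathcomp Require Import zify ring.
Import Order.TTheory GRing.Theory Num.Theory.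
Local Open Scope ring_scope.
Set Implicit Arguments. Unset Strict Implicit. Unset Printing Implicit Defensive.

(* For fixed x, the equation x_i x'_i = r_i has one solution x'_i if x_i != 0,
   q solutions if x_i = r_i = 0 and none otherwise, so the point count is a sum
   over x of products of these weights.  Replacing the last parameter 1 by c
   gives the counts N_m(c) of X_{D_m}(a, b, 1, ..., 1, c), and summing out the
   last two coordinates of x yields N_{m+2}(c) = Z_{m+2} + q N_m(-1/c) for
   c != 0, where Z_m = N_m(0).  The same recursion shows sum_{c != 0} N_m(c) =
   Z_{m+1}, hence Z_{m+2} = q Z_m + (q - 1) Z_{m+1}, which is solved in closed
   form.  Starting from c = 1, the iteration c |-> -1/c ends at N_3(+-1), which
   does not depend on the sign, or at N_2(+-1) = (q - 1 + [1 + a c = 0] q)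
   (q - 1 + [1 + b c = 0] q); whether a = b matters only through Z_3. *)

Lemma card_set_sum (R : pzSemiRingType) (T : finType) (P : pred T) :
  (#|[set p | P p]|%:R : R) = \sum_p (P p)%:R.
Proof.
rewrite -sum1_card natr_sum big_mkcond /=; apply: eq_bigr => p _.
by rewrite inE; case: (P p).
Qed.

Lemma sum_pair (R : nmodType) (T1 T2 : finType) (G : T1 * T2 -> R) :
  \sum_p G p = \sum_a \sum_b G (a, b).
Proof. by rewrite pair_bigA; apply: eq_bigr => -[]. Qed.

Lemma prod_indicator (R : comPzSemiRingType) (I : finType) (P : pred I) :
  \prod_i ((P i)%:R : R) = ([forall i, P i])%:R.
Proof.
case: (boolP [forall i, P i]) => [/forallP PI | /forallPn [i Pi]].
  by rewrite big1 // => i _; rewrite PI.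
by rewrite (bigD1 i) //= (negbTE Pi) mul0r.
Qed.

Lemma sum_indicator (R : pzSemiRingType) (T : finType) (P : pred T) a (f : T -> R) :
  P a -> \sum_(v | P v) (v == a)%:R * f v = f a.
Proof.
move=> Pa; rewrite (bigD1 a) //= eqxx mul1r big1 ?addr0 //.
by move=> v /andP [_ /negbTE ->]; rewrite mul0r.
Qed.

Lemma add1_mul_eq0 (F : fieldType) (a c : F) :
  a != 0 -> (1 + a * c == 0) = (c == - a^-1).
Proof. by move=> a0; rewrite -[RHS](inj_eq (mulfI a0)) mulrN divff // addrC addr_eq0. Qed.

Section FfunRcons.
Variable T : finType.

Definition ffun_rcons m (g : {ffun 'I_m -> T}) (u : T) : {ffun 'I_m.+1 -> T} :=
  [ffun i : 'I_m.+1 => oapp g u (insub (val i) : option 'I_m)].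

Lemma sum_ffun_rcons (R : nmodType) m (G : {ffun 'I_m.+1 -> T} -> R) :
  \sum_f G f = \sum_(g : {ffun 'I_m -> T}) \sum_u G (ffun_rcons g u).
Proof.
rewrite pair_bigA /= (reindex (fun p : {ffun 'I_m -> T} * T => ffun_rcons p.1 p.2)) //.
exists (fun f : {ffun 'I_m.+1 -> T} =>
          ([ffun j : 'I_m => f (widen_ord (leqnSn m) j)], f ord_max)).
  case=> g u _ /=; congr (_, _).
    by apply/ffunP => j; rewrite !ffunE /= valK.
  by rewrite ffunE insubN //= ltnn.
move=> f _; apply/ffunP => i; rewrite ffunE /=.
case: insubP => [j _ Ej|Hi] /=.
  by rewrite ffunE; congr (f _); apply: val_inj.
congr (f _); apply: val_inj => /=; move: (ltn_ord i) Hi; lia.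
Qed.

Lemma sum_ffun0 (R : nmodType) (G : {ffun 'I_0 -> T} -> R) g0 : \sum_g G g = G g0.
Proof.
rewrite (eq_bigr (fun _ => G g0)); last by move=> g _; congr G; apply/ffunP => -[].
by rewrite sumr_const card_ffun card_ord expn0.
Qed.

End FfunRcons.

Arguments Defs.coord : simpl never.

Lemma coord_ord (F : finFieldType) n (f : {ffun 'I_n -> F}) (i : 'I_n) :
  Defs.coord f i.+1 = f i.
Proof. by rewrite /Defs.coord valK. Qed.

Lemma coord_ffun_rcons (F : finFieldType) m (g : {ffun 'I_m -> F}) u k :
  Defs.coord (ffun_rcons g u) k =
  if (k <= m)%N then Defs.coord g k else if k == m.+1 then u else 0.
Proof.
rewrite /Defs.coord; case: k => [|k] //=.
case: insubP => [i Hi Ei|Hi].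
  rewrite /= /ffun_rcons ffunE Ei; case: insubP => [j Hj Ej|Hj]; first by rewrite ifT.
  have -> : (k < m)%N = false by apply/negbTE.
  by have -> : (k.+1 == m.+1) by rewrite eqSS; apply/eqP; move: Hi Hj; lia.
have -> : (k < m)%N = false by apply/negbTE; move: Hi; lia.
by have -> : (k.+1 == m.+1) = false by apply/negbTE; move: Hi; lia.
Qed.

Lemma coord_ffun_rcons_le (F : finFieldType) m (g : {ffun 'I_m -> F}) u k :
  (k <= m)%N -> Defs.coord (ffun_rcons g u) k = Defs.coord g k.
Proof. by rewrite coord_ffun_rcons => ->. Qed.

Lemma coord_ffun_rcons_last (F : finFieldType) m (g : {ffun 'I_m -> F}) u :
  Defs.coord (ffun_rcons g u) m.+1 = u.
Proof. by rewrite coord_ffun_rcons ltnn eqxx. Qed.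

Section MulSolutions.
Variable F : finFieldType.
Local Notation q := (#|F|%:R : rat).

Definition nsol (x r : F) : rat := if x != 0 then 1 else if r == 0 then q else 0.

Lemma sum_mul_eq (x r : F) : \sum_y ((x * y == r)%:R : rat) = nsol x r.
Proof.
rewrite /nsol; have [->|x0] /= := eqVneq x 0.
  under eq_bigr do rewrite mul0r.
  by rewrite sumr_const eq_sym; case: (r == 0); rewrite ?mul0rn.
transitivity (\sum_y (y == r / x)%:R * (1 : rat)); last by rewrite sum_indicator.
by apply: eq_bigr => y _; rewrite mulr1 -(inj_eq (mulfI x0) y) mulrCA divff // mulr1.
Qed.

Lemma nsol_nz x r : x != 0 -> nsol x r = 1.
Proof. by rewrite /nsol => ->. Qed.

Lemma nsol0 r : nsol 0 r = (r == 0)%:R * q.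
Proof. by rewrite /nsol eqxx /=; case: (r == 0); rewrite ?mul1r ?mul0r. Qed.

Lemma sumr_nz_const (k : rat) : \sum_(v : F | v != 0) k = (q - 1) * k.
Proof.
rewrite sumr_const cardC1 -subn1 mulrnBr ?mulrBl ?mul1r ?mulr_natl //.
exact: ltnW (card_finNzRing_gt1 F).
Qed.

Lemma sum_nsol r : \sum_v nsol v r = (q - 1) + (r == 0)%:R * q.
Proof.
rewrite (bigD1 0) //= addrC nsol0; congr (_ + _).
by rewrite -[q - 1]mulr1 -sumr_nz_const; apply: eq_bigr => v; apply: nsol_nz.
Qed.

Lemma sum_nsol_pair u z c :
  \sum_v nsol u (1 + z * v) * nsol v (1 + c * u) =
  if u != 0 then (q - 1) + (1 + c * u == 0)%:R * q else (z != 0)%:R * q.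
Proof.
have [->|u0] /= := eqVneq u 0; last first.
  by under eq_bigr do rewrite (nsol_nz _ u0) mul1r; rewrite sum_nsol.
have [->|z0] /= := eqVneq z 0.
  by rewrite mul0r big1 // => v _; rewrite mul0r addr0 nsol0 oner_eq0 !mul0r.
have zi : - z^-1 != 0 by rewrite oppr_eq0 invr_eq0.
under eq_bigr do rewrite nsol0 add1_mul_eq0 // -mulrA.
by rewrite sum_indicator // mulr0 addr0 nsol_nz // mulr1 mul1r.
Qed.

Lemma qm1_neq0 : q - 1 != 0.
Proof. by rewrite subr_eq0 pnatr_eq1 gtn_eqF ?card_finNzRing_gt1. Qed.

Lemma qp1_neq0 : q + 1 != 0.
Proof. by rewrite natr1 pnatr_eq0. Qed.

Lemma q2m1_neq0 : q ^+ 2 - 1 != 0.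
Proof. by rewrite subr_sqr_1 mulf_neq0 // ?qp1_neq0 ?qm1_neq0. Qed.

End MulSolutions.

Section TruncatedSystem.
Variables (F : finFieldType) (al be : F).
Local Notation q := (#|F|%:R : rat).

(* Right-hand sides of X_{D_m}(al, be, 1, ..., 1, c).  For m = 2 the variable
   x_3 is replaced by c, so that c always plays the role of x_{m+1}. *)
Definition trunc_rhs m (c : F) (X : nat -> F) (k : nat) : F :=
  if k == 1%N then 1 + al * (if m == 2%N then c else X 3%N)
  else if k == 2%N then 1 + be * (if m == 2%N then c else X 3%N)
  else if k == 3%N then
    (if m == 3%N then 1 + c * X 1%N * X 2%N else 1 + X 1%N * X 2%N * X 4%N)
  else if k == m then 1 + c * X m.-1
  else 1 + X k.-1 * X k.+1.

Definition trunc_weight m c (X : nat -> F) : rat :=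
  \prod_(i < m) nsol (X i.+1) (trunc_rhs m c X i.+1).

Definition ntrunc m c : rat :=
  \sum_(g : {ffun 'I_m -> F}) trunc_weight m c (Defs.coord g).

Lemma rhsD_params2 n X k : (3 <= n)%N -> (1 <= k <= n)%N ->
  rhsD n (params2 al be) X k = trunc_rhs n 1 X k.
Proof.
move=> n3 /andP [k1 kn]; rewrite /rhsD /trunc_rhs /params2.
have -> : (n == 2%N) = false by apply/eqP; lia.
have [//|k1'] := eqVneq k 1%N; have [//|k2'] := eqVneq k 2%N.
have [_|k3'] := eqVneq k 3%N; first by case: (n == 3%N); rewrite mul1r.
have -> : (n == 1%N) = false by apply/eqP; lia.
by have [_|kn'] := eqVneq k n; rewrite mul1r.
Qed.

Lemma NX_params2 n : (3 <= n)%N -> (NX n (params2 al be))%:R = ntrunc n 1.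
Proof.
move=> n3; rewrite /NX card_set_sum sum_pair /ntrunc; apply: eq_bigr => g _.
under eq_bigr do rewrite -prod_indicator.
under eq_bigr do under eq_bigr do rewrite !coord_ord.
rewrite /trunc_weight -(bigA_distr_bigA (fun (i : 'I_n) (y : F) =>
   ((g i * y == rhsD n (params2 al be) (Defs.coord g) i.+1))%:R : rat)) /=.
apply: eq_bigr => i _.
by rewrite sum_mul_eq coord_ord rhsD_params2 // ltn_ord.
Qed.

Lemma trunc_rhs_congr m c X Y k : (2 <= m)%N -> (1 <= k <= m)%N ->
  {in [pred i | 1 <= i <= m]%N, X =1 Y} -> trunc_rhs m c X k = trunc_rhs m c Y k.
Proof.
move=> m2 /andP [k1 km] XY; rewrite /trunc_rhs.
case: ifP => [/eqP Hk|Hk1]; first by case: ifP => [//|/eqP Hm]; rewrite XY // inE; lia.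
case: ifP => [/eqP Hk|Hk2]; first by case: ifP => [//|/eqP Hm]; rewrite XY // inE; lia.
case: ifP => [/eqP Hk|Hk3]; first by case: ifP => /eqP Hm; rewrite !XY // inE; lia.
by case: ifP => [/eqP Hk|Hkm]; rewrite !XY // inE; lia.
Qed.

Lemma trunc_weight_congr m c X Y : (2 <= m)%N ->
  {in [pred i | 1 <= i <= m]%N, X =1 Y} -> trunc_weight m c X = trunc_weight m c Y.
Proof.
move=> m2 XY; apply: eq_bigr => i _.
have Hi : (1 <= i.+1 <= m)%N by rewrite /= ltn_ord.
by rewrite (XY _ Hi) (trunc_rhs_congr c m2 Hi XY).
Qed.

(* The product of the neighbours of x_{m+1} other than x_{m+2}. *)
Definition nbr_prod m (X : nat -> F) : F := if m == 2%N then X 1%N * X 2%N else X m.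

Lemma nbr_prod_congr m X Y : (2 <= m)%N ->
  {in [pred i | 1 <= i <= m]%N, X =1 Y} -> nbr_prod m X = nbr_prod m Y.
Proof. by move=> m2 XY; rewrite /nbr_prod; case: ifP => [/eqP m2'|_]; rewrite !XY // inE; lia. Qed.

Lemma trunc_rhs_shift m c X k : (2 <= m)%N -> (1 <= k <= m)%N ->
  trunc_rhs m.+2 c X k = trunc_rhs m (X m.+1) X k.
Proof.
move=> m2 /andP [k1 km]; rewrite /trunc_rhs.
have -> : (m.+2 == 2%N) = false by apply/eqP; lia.
have -> : (m.+2 == 3%N) = false by apply/eqP; lia.
case: ifP => [/eqP Hk|_]; first by case: ifP => [/eqP ->|].
case: ifP => [/eqP Hk|_]; first by case: ifP => [/eqP ->|].
case: ifP => [/eqP Hk|_]; first by case: ifP => [/eqP Hm|//]; rewrite Hm /=; ring.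
have -> : (k == m.+2) = false by apply/eqP; lia.
by case: ifP => [/eqP Hkm|//]; rewrite Hkm /=; ring.
Qed.

Lemma trunc_weight_split m c X : (2 <= m)%N ->
  trunc_weight m.+2 c X = trunc_weight m (X m.+1) X
    * nsol (X m.+1) (1 + nbr_prod m X * X m.+2) * nsol (X m.+2) (1 + c * X m.+1).
Proof.
move=> m2; rewrite /trunc_weight !big_ord_recr /=; congr (_ * _ * _).
- by apply: eq_bigr => i _; rewrite trunc_rhs_shift //= ltn_ord.
- rewrite /trunc_rhs /nbr_prod.
  have -> : (m.+1 == 1%N) = false by apply/eqP; lia.
  have -> : (m.+1 == 2%N) = false by apply/eqP; lia.
  have -> : (m.+2 == 3%N) = false by apply/eqP; lia.
  have -> : (m.+1 == m.+2) = false by apply/eqP; lia.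
  have [-> //|m2'] := eqVneq m 2%N.
  by have -> : (m.+1 == 3%N) = false by apply/eqP; lia.
- rewrite /trunc_rhs.
  have -> : (m.+2 == 1%N) = false by apply/eqP; lia.
  have -> : (m.+2 == 2%N) = false by apply/eqP; lia.
  have -> : (m.+2 == 3%N) = false by apply/eqP; lia.
  by rewrite eqxx.
Qed.

(* With c = 0 the equation at the end (or, for m = 2, those of the two short
   leaves) reads x x' = 1, which has no solution when x = 0. *)
Lemma trunc_weight0_nbr0 m X : (2 <= m)%N -> nbr_prod m X = 0 -> trunc_weight m 0 X = 0.
Proof.
move=> m2; rewrite /nbr_prod /trunc_weight; have [-> /eqP|m2'] /= := eqVneq m 2%N.
  rewrite mulf_eq0 => /orP [] /eqP X0;
    [rewrite (bigD1 (@ord0 1)) | rewrite (bigD1 (@ord_max 1))] => //=;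
    by rewrite X0 /trunc_rhs /= mulr0 addr0 nsol0 oner_eq0 !mul0r.
move=> X0; have mm : (m.-1 < m)%N by lia.
have rhs_last : trunc_rhs m 0 X m = 1.
  rewrite /trunc_rhs (negbTE m2'); have -> : (m == 1%N) = false by apply/eqP; lia.
  by case: ifP => [/eqP -> /=|_]; rewrite ?eqxx !mul0r addr0.
rewrite (bigD1 (Ordinal mm)) //= prednK; last by lia.
by rewrite X0 rhs_last nsol0 oner_eq0 !mul0r.
Qed.

Definition transfer (c u : F) : rat :=
  if u != 0 then (q - 1) + (1 + c * u == 0)%:R * q else q.

Lemma ntrunc_rec m c : (2 <= m)%N -> ntrunc m.+2 c = \sum_u transfer c u * ntrunc m u.
Proof.
move=> m2; rewrite /ntrunc sum_ffun_rcons sum_ffun_rcons.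
under [RHS]eq_bigr do rewrite mulr_sumr.
rewrite [RHS]exchange_big /=; apply: eq_bigr => g _; apply: eq_bigr => u _.
have low v : {in [pred i | 1 <= i <= m]%N,
    Defs.coord (ffun_rcons (ffun_rcons g u) v) =1 Defs.coord g}.
  by move=> i /andP [_ im]; rewrite !coord_ffun_rcons_le // (leqW im).
under eq_bigr => v _ do rewrite trunc_weight_split // coord_ffun_rcons_last
   coord_ffun_rcons_le // coord_ffun_rcons_last (trunc_weight_congr u m2 (low v))
   (nbr_prod_congr m2 (low v)) -mulrA.
rewrite -mulr_sumr sum_nsol_pair mulrC /transfer.
have [u0|//] := eqVneq u 0.
have [nbr0|_] /= := eqVneq (nbr_prod m (Defs.coord g)) 0; last by rewrite mul1r.
by rewrite u0 trunc_weight0_nbr0 // !mulr0.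
Qed.

Lemma sum_ffun2 (G : (nat -> F) -> rat) :
  \sum_(g : {ffun 'I_2 -> F}) G (Defs.coord g) =
  \sum_x \sum_y G (Defs.coord (ffun_rcons (ffun_rcons [ffun i : 'I_0 => 0] x) y)).
Proof. by rewrite sum_ffun_rcons sum_ffun_rcons (sum_ffun0 _ [ffun => 0]). Qed.

Lemma trunc_weight2 c X :
  trunc_weight 2 c X = nsol (X 1%N) (1 + al * c) * nsol (X 2%N) (1 + be * c).
Proof. by rewrite /trunc_weight !big_ord_recr big_ord0 /= mul1r. Qed.

Lemma ntrunc2 c : ntrunc 2 c =
  ((q - 1) + (1 + al * c == 0)%:R * q) * ((q - 1) + (1 + be * c == 0)%:R * q).
Proof.
rewrite /ntrunc (sum_ffun2 (trunc_weight 2 c)) -!sum_nsol mulr_suml.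
apply: eq_bigr => x _; rewrite mulr_sumr; apply: eq_bigr => y _.
by rewrite trunc_weight2 coord_ffun_rcons_le // !coord_ffun_rcons_last.
Qed.

Definition ntrunc0 m : rat := ntrunc m 0.
Definition ntrunc_nz m : rat := \sum_(c | c != 0) ntrunc m c.

Lemma trunc_weight3 c X :
  trunc_weight 3 c X = trunc_weight 2 (X 3%N) X * nsol (X 3%N) (1 + c * X 1%N * X 2%N).
Proof.
rewrite /trunc_weight big_ord_recr /=; congr (_ * _); apply: eq_bigr => i _.
by rewrite /trunc_rhs /=; case: i => [[|[|]]].
Qed.

Lemma ntrunc3 c : ntrunc 3 c = ntrunc_nz 2 + (c != 0)%:R * ((q - 1) * q).
Proof.
have low (g : {ffun 'I_2 -> F}) u : {in [pred i | 1 <= i <= 2]%N,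
    Defs.coord (ffun_rcons g u) =1 Defs.coord g}.
  by move=> i /andP [_ i2]; rewrite coord_ffun_rcons_le.
rewrite /ntrunc sum_ffun_rcons.
under eq_bigr => g _ do under eq_bigr => u _ do rewrite trunc_weight3
  coord_ffun_rcons_last (trunc_weight_congr u (ltnSn 1) (low g u)) !coord_ffun_rcons_le //.
rewrite exchange_big (bigD1 0) //= addrC /ntrunc_nz /ntrunc; congr (_ + _).
  by apply: eq_bigr => u u0; apply: eq_bigr => g _; rewrite nsol_nz // mulr1.
rewrite (sum_ffun2 (fun X => trunc_weight 2 0 X * nsol 0 (1 + c * X 1%N * X 2%N))).
transitivity (\sum_x nsol x 1 * \sum_y nsol 0 (1 + (c * x) * y) * nsol y (1 + c * 0)).
  apply: eq_bigr => x _; rewrite mulr_sumr; apply: eq_bigr => y _.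
  rewrite trunc_weight2 coord_ffun_rcons_le // !coord_ffun_rcons_last !mulr0 !addr0.
  by rewrite -mulrA (mulrC (nsol y 1)).
under eq_bigr do rewrite sum_nsol_pair eqxx /= mulf_eq0.
have [_|c0] /= := eqVneq c 0.
  by rewrite [RHS]mul0r big1 // => x _; rewrite mul0r mulr0.
rewrite (bigD1 0) //= nsol0 oner_eq0 !mul0r add0r mul1r -sumr_nz_const.
by apply: eq_bigr => x x0; rewrite nsol_nz // x0 !mul1r.
Qed.

Lemma ntrunc_rec_split m c : (2 <= m)%N -> ntrunc m.+2 c =
  q * ntrunc0 m + (q - 1) * ntrunc_nz m + (c != 0)%:R * (q * ntrunc m (- c^-1)).
Proof.
move=> m2; rewrite ntrunc_rec // (bigD1 0) //= /transfer eqxx /= -addrA; congr (_ + _).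
under eq_bigr => u u0 do rewrite u0 mulrDl.
rewrite big_split /= -mulr_sumr; congr (_ + _).
have [->|c0] /= := eqVneq c 0.
  by rewrite [RHS]mul0r big1 // => u _; rewrite mul0r addr0 oner_eq0 !mul0r.
have ci : - c^-1 != 0 by rewrite oppr_eq0 invr_eq0.
under eq_bigr do rewrite add1_mul_eq0 // -mulrA.
by rewrite sum_indicator // mul1r.
Qed.

Lemma ntrunc0_rec m : (2 <= m)%N ->
  ntrunc0 m.+2 = q * ntrunc0 m + (q - 1) * ntrunc_nz m.
Proof. by move=> m2; rewrite {1}/ntrunc0 ntrunc_rec_split // eqxx mul0r addr0. Qed.

Lemma ntrunc_rec_nz m c : (2 <= m)%N -> c != 0 ->
  ntrunc m.+2 c = ntrunc0 m.+2 + q * ntrunc m (- c^-1).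
Proof. by move=> m2 c0; rewrite ntrunc_rec_split // c0 mul1r ntrunc0_rec. Qed.

Lemma sum_nz_ntrunc_inv m : \sum_(c | c != 0) ntrunc m (- c^-1) = ntrunc_nz m.
Proof.
rewrite /ntrunc_nz (reindex_inj (h := fun c : F => - c^-1)) /=.
  apply: eq_big => [c|c _]; first by rewrite oppr_eq0 invr_eq0.
  by rewrite invrN invrK opprK.
by move=> x y /oppr_inj /invr_inj.
Qed.

Lemma ntrunc_nz_rec m : (2 <= m)%N ->
  ntrunc_nz m.+2 = (q - 1) * ntrunc0 m.+2 + q * ntrunc_nz m.
Proof.
move=> m2; rewrite {1}/ntrunc_nz.
under eq_bigr => c c0 do rewrite ntrunc_rec_nz //.
by rewrite big_split /= sumr_nz_const -mulr_sumr sum_nz_ntrunc_inv.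
Qed.

Lemma ntrunc0_2 : ntrunc0 2 = (q - 1) ^+ 2.
Proof. by rewrite /ntrunc0 ntrunc2 !mulr0 !addr0 oner_eq0 !mul0r !addr0 expr2. Qed.

Lemma ntrunc_nz_2 : al != 0 -> be != 0 ->
  ntrunc_nz 2 = (q - 1) ^+ 3 + 2 * q * (q - 1) + (al == be)%:R * q ^+ 2.
Proof.
move=> a0 b0; have prod_indicator2 (x y : rat) (A B c : F) :
    (x + (c == A)%:R * y) * (x + (c == B)%:R * y) = x ^+ 2 + (c == A)%:R * (x * y)
      + (c == B)%:R * (x * y) + (c == A)%:R * ((A == B)%:R * y ^+ 2).
  by case: (c =P A) => [->|_]; case: (A =P B) => [_|_]; rewrite ?eqxx /=; ring.
have ai : - al^-1 != 0 by rewrite oppr_eq0 invr_eq0.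
have bi : - be^-1 != 0 by rewrite oppr_eq0 invr_eq0.
rewrite /ntrunc_nz; under eq_bigr do rewrite ntrunc2 !add1_mul_eq0 // prod_indicator2.
rewrite !big_split /= sumr_nz_const !sum_indicator // eqr_opp (inj_eq invr_inj).
ring.
Qed.

Lemma ntrunc_nz_eq m : (2 <= m)%N -> ntrunc_nz m = ntrunc0 m.+1.
Proof.
move=> m2; rewrite -(subnKC m2); move: (m - 2)%N => k {m m2}.
suff : ntrunc_nz k.+2 = ntrunc0 k.+3 /\ ntrunc_nz k.+3 = ntrunc0 k.+4 by case.
elim: k => [|k [IH0 IH1]].
  have nz3 : ntrunc_nz 3 = (q - 1) * (ntrunc_nz 2 + (q - 1) * q).
    by rewrite -sumr_nz_const; apply: eq_bigr => c c0; rewrite ntrunc3 c0 mul1r.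
  by rewrite /ntrunc0 ntrunc3 eqxx mul0r addr0 -/(ntrunc0 4) ntrunc0_rec // nz3
    ntrunc0_2; split=> //; ring.
split=> //.
by rewrite ntrunc_nz_rec // IH0 [RHS]ntrunc0_rec // IH1 addrC.
Qed.

Lemma ntrunc0E k : al != 0 -> be != 0 -> ntrunc0 k.+2 =
  (q - 1) * (q ^+ k.+1 + (-1) ^+ k.+1)
  + (al == be)%:R * q ^+ 2 * (q ^+ k + (-1) ^+ k.+1) / (q + 1).
Proof.
move=> a0 b0; have q1 := qp1_neq0 F.
pose Z j := (q - 1) * (q ^+ j.+1 + (-1) ^+ j.+1)
  + (al == be)%:R * q ^+ 2 * (q ^+ j + (-1) ^+ j.+1) / (q + 1).
suff : ntrunc0 k.+2 = Z k /\ ntrunc0 k.+3 = Z k.+1 by case.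
elim: k => [|k [IH0 IH1]].
  rewrite -(ntrunc_nz_eq (m := 2)) // ntrunc0_2 ntrunc_nz_2 // /Z.
  by split; field.
split=> //; rewrite ntrunc0_rec // ntrunc_nz_eq // IH0 IH1 /Z !exprS.
by field.
Qed.

Lemma ntrunc_odd j c : al != 0 -> be != 0 -> c != 0 -> ntrunc j.*2.+3 c =
  q ^+ j.*2.+3 - 1 + (al == be)%:R * q ^+ 2 * (q ^+ j.*2.+2 - 1) / (q ^+ 2 - 1).
Proof.
move=> a0 b0; have q1 := qp1_neq0 F; have q2 := q2m1_neq0 F.
elim: j c => [|j IH] c c0; first by rewrite ntrunc3 c0 mul1r ntrunc_nz_2 //; field.
rewrite doubleS ntrunc_rec_nz // IH ?oppr_eq0 ?invr_eq0 // ntrunc0E //.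
by rewrite !exprS expr0 -signr_odd odd_double; field; rewrite -expr2 q2 q1.
Qed.

Lemma ntrunc_even j c : al != 0 -> be != 0 -> c * c = 1 -> ntrunc j.*2.+2 c =
  (q ^+ j.+1 - 1) ^+ 2 - q ^+ j * (q - 1) ^+ 2
  + (al == be)%:R * q ^+ 2 * ((q ^+ j - 1) * (q ^+ j.+1 - 1)) / (q ^+ 2 - 1)
  + q ^+ j * ntrunc 2 ((-1) ^+ j * c).
Proof.
move=> a0 b0; have q1 := qp1_neq0 F; have q2 := q2m1_neq0 F.
elim: j c => [|j IH] c cc; first by rewrite !expr0 !mul1r; field.
have c0 : c != 0 by apply: contra_eq_neq cc => ->; rewrite mul0r eq_sym oner_neq0.
have ci : c^-1 = c by rewrite -[c^-1]mul1r -cc mulfK.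
rewrite doubleS ntrunc_rec_nz // ci IH ?mulrNN // ntrunc0E //.
rewrite [(-1) ^+ j.+1]exprS mulN1r mulNr -mulrN.
by rewrite !exprS expr0 -signr_odd odd_double -addnn exprD; field; rewrite -expr2 q2 q1.
Qed.

End TruncatedSystem.

Lemma odd_geq3 n : odd n -> (3 <= n)%N -> exists j, n = j.*2.+3.
Proof.
move=> on n3; have := odd_double_half n; rewrite on -mul2n => Dn.
by exists (n./2 - 1)%N; rewrite -mul2n; lia.
Qed.

Lemma even_geq3 n : ~~ odd n -> (3 <= n)%N -> exists2 j, (0 < j)%N & n = j.*2.+2.
Proof.
move=> en n3; have := odd_double_half n; rewrite (negbTE en) -mul2n => Dn.
by exists (n./2 - 1)%N; rewrite -?mul2n; lia.
Qed.

Lemma add1_mul_sign_eq0 (F : fieldType) (a : F) j :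
  (1 + a * (-1) ^+ j == 0) = (a == (-1) ^+ j.+1).
Proof. by rewrite mulrC add1_mul_eq0 ?signr_eq0 // -exprVn invrN1 exprS mulN1r. Qed.

Section PointCounts.
Variable F : finFieldType.
Local Notation q := (#|F|%:R : rat).

Lemma NDoddE j (a : F) : a != 0 -> (NDodd j.*2.+3 a)%:R =
  q ^+ j.*2.+3 - 1 + (a == 1)%:R * q ^+ 2 * (q ^+ j.*2.+2 - 1) / (q ^+ 2 - 1).
Proof. by move=> a0; rewrite /NDodd NX_params2 // ntrunc_odd ?oner_neq0. Qed.

Lemma NDevenE j (a b : F) : (0 < j)%N -> a != 0 -> b != 0 -> (NDeven j.*2.+2 a b)%:R =
  (q ^+ j.+1 - 1) ^+ 2 - q ^+ j * (q - 1) ^+ 2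
  + (a == b)%:R * q ^+ 2 * ((q ^+ j - 1) * (q ^+ j.+1 - 1)) / (q ^+ 2 - 1)
  + q ^+ j * (((q - 1) + (a == (-1) ^+ j.+1)%:R * q)
              * ((q - 1) + (b == (-1) ^+ j.+1)%:R * q)).
Proof.
move=> j0 a0 b0; rewrite /NDeven NX_params2; last by rewrite -addnn; lia.
rewrite ntrunc_even ?mulr1 //.
by rewrite ntrunc2 !add1_mul_sign_eq0.
Qed.

End PointCounts.

Theorem mainTheorem16 (F : finFieldType) (n : nat) :
  (3 <= n)%N ->
  let q : rat := (#|F|)%:R in
  let s : F := (-1) ^+ n./2 in
  (* (1) *)
  (odd n -> forall a : F, a != 0 -> a != 1 ->
     (NDodd n a)%:R = q ^+ n - 1) /\
  (* (2) *)
  (odd n ->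
     (NDodd n (1 : F))%:R = q ^+ n - 1 + q ^+ 2 * ((q ^+ n.-1 - 1) / (q ^+ 2 - 1))) /\
  (* (3) *)
  (~~ odd n -> forall a b : F, a != 0 -> b != 0 -> a != b -> a != s -> b != s ->
     (NDeven n a b)%:R = (q ^+ n./2 - 1) ^+ 2) /\
  (* (4) *)
  (~~ odd n -> forall a : F, a != 0 -> a != s ->
     (NDeven n a a)%:R = (q ^+ n./2 - 1) ^+ 2
        + q ^+ 2 * ((q ^+ (n./2 - 1) - 1) * (q ^+ n./2 - 1) / (q ^+ 2 - 1))) /\
  (* (5) *)
  (~~ odd n -> forall b : F, b != 0 -> s != b ->
     (NDeven n s b)%:R = (q ^+ n./2 - 1) ^+ 2 + (q - 1) * q ^+ n./2) /\
  (* (6) *)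
  (~~ odd n ->
     (NDeven n s s)%:R = (q ^+ n./2 - 1) ^+ 2 + 2 * (q - 1) * q ^+ n./2
        + q ^+ 2 * ((q ^+ (n./2 - 1) - 1) * (q ^+ n./2 - 1) / (q ^+ 2 - 1))
        + q ^+ (n./2).+1).
Proof.
move=> n3 q s; subst q s.
have [on|en] := boolP (odd n).
  have [j ->] := odd_geq3 on n3; rewrite /=.
  split; [|split]; last by [].
  - by move=> _ a a0 a1; rewrite NDoddE // (negbTE a1) !mul0r addr0.
  - by move=> _; rewrite NDoddE ?oner_neq0 // eqxx mul1r mulrA.
have [j j0 ->] := even_geq3 en n3; rewrite /= doubleK subn1 /=.
have s0 : (-1) ^+ j.+1 != 0 :> F by rewrite signr_eq0.
split=> [//|]; split=> [//|]; split; [|split; [|split]].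
- move=> _ a b a0 b0 /negbTE ab /negbTE aS /negbTE bS.
  by rewrite NDevenE // ab aS bS /=; ring.
- by move=> _ a a0 /negbTE aS; rewrite NDevenE // eqxx aS /= !exprS; ring.
- move=> _ b b0 /negbTE Sb; rewrite NDevenE // Sb eqxx eq_sym Sb /= !exprS; ring.
- by move=> _; rewrite NDevenE // eqxx /= !exprS; ring.
Qed.
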